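(* Let $K\in\mathbb{E}_{Büchi}$ and let $\dot-$ be a contraction function on $K$. Then $\dot-$ is rational and remains in $\mathbb{E}_{Büchi}$ if and only if $\dot-=\dot-_\gamma$ for some Büchi choice function $\gamma$.
   Context: Fix a finite nonempty $AP$. LTL formulae $\varphi::=\bot\mid p\mid\neg\varphi\mid\varphi\lor\varphi\mid X\varphi\mid\varphi U\varphi$ with standard semantics on traces in $(2^{AP})^\omega$; $\mathrm{Cn}_{LTL}(X)$ = formulae satisfied by every (finite) Kripke structure all of whose traces satisfy all of $X$; $\varphi\equiv\psi$ iff $\mathrm{Cn}_{LTL}(\{\varphi\})=\mathrm{Cn}_{LTL}(\{\psi\})$; $K+\varphi:=\mathrm{Cn}_{LTL}(K\cup\{\varphi\})$. Büchi automata over $2^{AP}$ (runs from initial states visiting recurrence states infinitely often), language $\mathcal{L}(A)$, $\mathrm{supp}(A):=\{\varphi\mid\pi\models\varphi\ \forall\pi\in\mathcal{L}(A)\}$; $\mathbb{E}_{Büchi}:=\{\mathrm{supp}(A)\mid A$ Büchi automaton$\}$. A contraction function on theory $K$ maps each formula $\varphi$ to $K\dot-\varphi$; rational means: (K1) $K\dot-\varphi=\mathrm{Cn}_{LTL}(K\dot-\varphi)$; (K2) $K\dot-\varphi\subseteq K$; (K3) $\varphi\notin K\Rightarrow K\dot-\varphi=K$; (K4) $\varphi\notin\mathrm{Cn}_{LTL}(\emptyset)\Rightarrow\varphi\notin K\dot-\varphi$; (K5) $K\subseteq(K\dot-\varphi)+\varphi$; (K6) $\varphi\equiv\psi\Rightarrow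 K\dot-\varphi=K\dot-\psi$. It remains in $\mathbb{E}_{Büchi}$ if all values lie in $\mathbb{E}_{Büchi}$. A Büchi choice function $\gamma$ maps each LTL formula to a Büchi automaton such that (BF1) $\mathcal{L}(\gamma(\varphi))\neq\emptyset$; (BF2) if $\varphi$ is not a tautology then $\neg\varphi\in\mathrm{supp}(\gamma(\varphi))$; (BF3) if $\varphi\equiv\psi$ then $\mathcal{L}(\gamma(\varphi))=\mathcal{L}(\gamma(\psi))$. The Büchi contraction function induced by $\gamma$ on $K$ is $K\dot-_\gamma\varphi:=K\cap\mathrm{supp}(\gamma(\varphi))$ if $\varphi\notin\mathrm{Cn}_{LTL}(\emptyset)$ and $\varphi\in K$, and $K\dot-_\gamma\varphi:=K$ otherwise. *)

From mathcomp Require Import all_boot.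
Unset Printing Implicit Defensive.

Section LTL.
Variable AP : finType.

Inductive ltl : Type :=
| LBot : ltl
| LAtom : AP -> ltl
| LNeg : ltl -> ltl
| LOr : ltl -> ltl -> ltl
| LNext : ltl -> ltl
| LUntil : ltl -> ltl -> ltl.

Definition trace := nat -> {set AP}.

Fixpoint sat (pi : trace) (i : nat) (phi : ltl) : Prop :=
  match phi with
  | LBot => False
  | LAtom p => p \in pi i
  | LNeg f => ~ sat pi i f
  | LOr f g => sat pi i f \/ sat pi i g
  | LNext f => sat pi i.+1 f
  | LUntil f g => exists k, i <= k /\ sat pi k g /\
                    (forall j, i <= j -> j < k -> sat pi j f)
  end.

Definition models (pi : trace) (phi : ltl) : Prop := sat pi 0 phi.

Definition theory := ltl -> Prop.

Record kripke := Kripke {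
  kstate : finType;
  kinit : pred kstate;
  ktrans : rel kstate;
  klabel : kstate -> {set AP};
  kinit_ne : exists s, kinit s;
  ktrans_total : forall s, exists t, ktrans s t
}.


Definition is_trace (M : kripke) (pi : trace) : Prop :=
  exists r : nat -> kstate M,
    kinit M (r 0) /\ (forall i, ktrans M (r i) (r i.+1)) /\
    (forall i, pi i = klabel M (r i)).

Definition Cn (X : theory) : theory := fun phi =>
  forall M : kripke,
    (forall pi, is_trace M pi -> forall psi, X psi -> models pi psi) ->
    (forall pi, is_trace M pi -> models pi phi).

Definition lequiv (phi psi : ltl) : Prop :=
  Cn (fun x => x = phi) = Cn (fun x => x = psi).

Definition expand (K : theory) (phi : ltl) : theory :=
  Cn (fun x => K x \/ x = phi).

Definition subth (A B : theory) : Prop := forall x, A x -> B x.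

Record buchi := Buchi {
  bstate : finType;
  binit : pred bstate;
  bdelta : bstate -> {set AP} -> bstate -> bool;
  bacc : pred bstate
}.


Definition accepting_run (A : buchi) (pi : trace) (r : nat -> bstate A) : Prop :=
  binit A (r 0) /\ (forall i, bdelta A (r i) (pi i) (r i.+1)) /\
  (forall n, exists m, n <= m /\ bacc A (r m)).

Definition lang (A : buchi) : trace -> Prop :=
  fun pi => exists r, accepting_run A pi r.

Definition supp (A : buchi) : theory :=
  fun phi => forall pi, lang A pi -> models pi phi.

Definition E_Buchi (T : theory) : Prop := exists A : buchi, T = supp A.

Definition contraction := ltl -> theory.

Definition rational (K : theory) (c : contraction) : Prop :=
  (forall phi, c phi = Cn (c phi)) /\                               (* K1 *)
  (forall phi, subth (c phi) K) /\                                  (* K2 *)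
  (forall phi, ~ K phi -> c phi = K) /\                             (* K3 *)
  (forall phi, ~ Cn (fun _ => False) phi -> ~ c phi phi) /\         (* K4 *)
  (forall phi, subth K (expand (c phi) phi)) /\                     (* K5 *)
  (forall phi psi, lequiv phi psi -> c phi = c psi).                (* K6 *)

Definition remains_in_EBuchi (c : contraction) : Prop :=
  forall phi, E_Buchi (c phi).

Definition tautology (phi : ltl) : Prop := forall pi : trace, models pi phi.

Definition buchi_choice (g : ltl -> buchi) : Prop :=
  (forall phi, exists pi, lang (g phi) pi) /\                       (* BF1 *)
  (forall phi, ~ tautology phi -> supp (g phi) (LNeg phi)) /\       (* BF2 *)
  (forall phi psi, lequiv phi psi -> lang (g phi) = lang (g psi)).  (* BF3 *)

Definition induced (K : theory) (g : ltl -> buchi) : contraction :=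
  fun phi chi =>
    K chi /\ ((~ Cn (fun _ => False) phi /\ K phi) -> supp (g phi) chi).

End LTL.

From HB Require Import structures.
From mathcomp Require Import all_boot zify.
From Stdlib Require Import Classical ClassicalEpsilon FunctionalExtensionality PropExtensionality.

(* Büchi supports are closed under [Cn]. If a word of L(C) refuted a consequence f of
   formulas true on L(C), the product of C with an automaton for ~f (a tableau over
   valuations of the subformulas of f, then degeneralised) would be nonempty; it then
   accepts an ultimately periodic word, the only trace of a finite lasso-shaped Kripke
   structure whose traces all lie in L(C) and refute f, contradicting f \in Cn.  Hence on
   Büchi theories [Cn] is semantic consequence: Cn(∅) is the set of tautologies and
   equivalent formulas have the same models.
   With this, the postulates for K -_γ are checked directly, its values being supports of
   the union of an automaton for K with γ(φ).  Conversely, a rational contraction with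
   Büchi values c(φ) = supp B_φ is induced by γ(φ) = B_φ ∩ L(¬φ): a word of B_φ either
   refutes φ, or satisfies φ and then, by recovery (K5), every formula of K. *)

Set Implicit Arguments.
Unset Strict Implicit.
Unset Printing Implicit Defensive.

Definition asbool (P : Prop) : bool :=
  if excluded_middle_informative P then true else false.

Lemma asboolP (P : Prop) : reflect P (asbool P).
Proof. by rewrite /asbool; case: excluded_middle_informative => h; constructor. Qed.

(* Fairness rules out the greatest solution of the unfolding ([u] true forever while [h]
   never holds), so [u] is its least solution, i.e. the until of [g] and [h]. *)
Lemma until_seqP (g h u : nat -> bool) :
  (forall j, u j = h j || g j && u j.+1) ->
  (forall n, exists2 m, n <= m & u m ==> h m) ->
  forall j, reflect (exists2 k, j <= k & h k /\ forall i, j <= i < k -> g i) (u j).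
Proof.
move=> u_step u_fair j; apply: (iffP idP).
- have [m jm /implyP um] := u_fair j.
  have [d mE] : exists d, m = j + d by exists (m - j); lia.
  rewrite {}mE {jm} in um; elim: d j um => [|d IHd] j' um uj.
    by rewrite addn0 in um; exists j' => //; split=> [|i]; [exact: um | lia].
  move: uj; rewrite u_step => /orP[hj|/andP[gj /IHd[|k jk [hk gk]]]].
  + by exists j' => //; split=> // i; lia.
  + by rewrite addSnnS.
  + exists k; [lia | split=> // i ijk].
    by case: (ltngtP j' i) => [ji|ij|<- //]; [apply: gk | exfalso]; lia.
- case=> k jk [hk gk].
  have [d kE] : exists d, k = j + d by exists (k - j); lia.
  elim: d j kE {jk} gk => [|d IHd] j' kE gk.
    by rewrite u_step kE addn0 in hk *; rewrite hk.
  rewrite u_step gk ?IHd ?orbT //; try lia.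
  by move=> i ji; apply: gk; lia.
Qed.

Lemma nat_pigeonhole (T : finType) (f : nat -> T) : exists x y, x < y /\ f x = f y.
Proof.
pose g (x : 'I_#|T|.+1) := f x.
have : ~~ injectiveb g by apply/negP=> /injectiveP/leq_card; rewrite card_ord ltnn.
case/injectivePn=> x [y xy gxy]; case: (ltngtP x y) => [xlty|yltx|/val_inj xy'].
- by exists x, y.
- by exists y, x.
- by rewrite xy' eqxx in xy.
Qed.

Section BuchiContraction.
Variable AP : finType.

Local Arguments LBot {AP}.
Local Arguments LNeg {AP}.
Local Arguments LOr {AP}.
Local Arguments LUntil {AP}.
Local Arguments sat {AP}.
Local Arguments models {AP}.
Local Arguments Cn {AP}.
Local Arguments lequiv {AP}.
Local Arguments subth {AP}.
Local Arguments bstate {AP}.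
Local Arguments binit {AP b}.
Local Arguments bdelta {AP b}.
Local Arguments bacc {AP b}.
Local Arguments is_trace {AP}.
Local Arguments accepting_run {AP}.
Local Arguments lang {AP}.
Local Arguments supp {AP}.
Local Arguments E_Buchi {AP}.
Local Arguments rational {AP}.
Local Arguments remains_in_EBuchi {AP}.
Local Arguments tautology {AP}.
Local Arguments buchi_choice {AP}.
Local Arguments induced {AP}.

Fixpoint ltl_eqb (f g : ltl AP) : bool :=
  match f, g with
  | LBot, LBot => true
  | LAtom p, LAtom q => p == q
  | LNeg f1, LNeg g1 => ltl_eqb f1 g1
  | LOr f1 f2, LOr g1 g2 => ltl_eqb f1 g1 && ltl_eqb f2 g2
  | LNext f1, LNext g1 => ltl_eqb f1 g1
  | LUntil f1 f2, LUntil g1 g2 => ltl_eqb f1 g1 && ltl_eqb f2 g2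
  | _, _ => false
  end.

Lemma ltl_eqP : Equality.axiom ltl_eqb.
Proof.
elim=> [|p|f IH|f IHf g IHg|f IH|f IHf g IHg] [|q|f'|f' g'|f'|f' g'] /=;
  try (by constructor);
  try (by apply: (iffP eqP) => [->|[]]);
  try (by apply: (iffP (IH f')) => [->|[]]);
  by apply: (iffP andP) => [[/IHf-> /IHg->] | [<- <-]]; split; [apply/IHf | apply/IHg].
Qed.

HB.instance Definition _ := hasDecEq.Build (ltl AP) ltl_eqP.

Lemma sat_until_step (pi : trace AP) j (f g : ltl AP) : sat pi j (LUntil f g) <->
  sat pi j g \/ sat pi j f /\ sat pi j.+1 (LUntil f g).
Proof.
split=> [[k [jk [gk fk]]]|[gj|[fj [k [jk [gk fk]]]]]].
- have [jk'|kj] := ltnP j k; last by rewrite (_ : j = k); [left | lia].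
  right; split; first exact: fk.
  by exists k; split=> //; split=> // i ji ik; apply: fk; lia.
- by exists j; split=> //; split=> // i ji ij; lia.
- exists k; split; first exact: ltnW.
  split=> // i ji ik; have [ji'|ij] := ltnP j i; first exact: fk.
  by rewrite (_ : i = j) //; lia.
Qed.

Fixpoint subformulas (f : ltl AP) : seq (ltl AP) :=
  f :: match f with
       | LBot | LAtom _ => [::]
       | LNeg g | LNext g => subformulas g
       | LOr g h | LUntil g h => subformulas g ++ subformulas h
       end.

Lemma subformulas_self f : f \in subformulas f.
Proof. by case: f => *; rewrite inE eqxx. Qed.

Lemma subformulas_trans f g h : g \in subformulas f -> h \in subformulas g -> h \in subformulas f.
Proof.
move=> + hg; elim: f => [|p|f IH|f IHf f' IHf'|f IH|f IHf f' IHf'];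
  rewrite [g \in _]in_cons => /predU1P[<- // |] //=; rewrite in_cons ?mem_cat => gf;
  apply/orP; right; rewrite ?mem_cat.
- exact: IH.
- by case/orP: gf => [/IHf|/IHf'] ->; rewrite ?orbT.
- exact: IH.
- by case/orP: gf => [/IHf|/IHf'] ->; rewrite ?orbT.
Qed.

Lemma subformulas_children f g : g \in subformulas f ->
  match g with
  | LBot | LAtom _ => true
  | LNeg g1 | LNext g1 => g1 \in subformulas f
  | LOr g1 g2 | LUntil g1 g2 => (g1 \in subformulas f) && (g2 \in subformulas f)
  end.
Proof.
move=> gf; case: g gf => //= [g|g h|g|g h] gf; rewrite ?(subformulas_trans gf) //=;
  by rewrite inE ?mem_cat subformulas_self ?orbT.
Qed.

Record gba := GBA {
  gstate : finType;
  ginit : pred gstate;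
  gdelta : gstate -> {set AP} -> gstate -> bool;
  gindex : finType;
  gacc : gindex -> pred gstate
}.

Definition gaccepting_run (G : gba) (pi : trace AP) (r : nat -> gstate G) : Prop :=
  ginit (r 0) /\ (forall i, gdelta (r i) (pi i) (r i.+1)) /\
  (forall k n, exists m, n <= m /\ gacc k (r m)).

Definition glang (G : gba) (pi : trace AP) : Prop :=
  exists r : nat -> gstate G, gaccepting_run pi r.

Section Degeneralization.
Variable G : gba.

Definition seen (q : gstate G) : {set gindex G} := [set k | gacc k q].

(* The second component of a state of [degen] collects the acceptance sets visited since
   the last reset; the state is accepting once it has collected all of them. *)
Definition degen_update (S : {set gindex G}) (q : gstate G) :=
  if S == setT then seen q else S :|: seen q.

Definition degen : buchi AP :=
  @Buchi AP (gstate G * {set gindex G})%type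
    (fun s => ginit s.1 && (s.2 == seen s.1))
    (fun s a s' => gdelta s.1 a s'.1 && (s'.2 == degen_update s.2 s'.1))
    (fun s => s.2 == setT).

Fixpoint degen_track (r : nat -> gstate G) (i : nat) : {set gindex G} :=
  if i is i'.+1 then degen_update (degen_track r i') (r i) else seen (r 0).

Lemma seen_sub_track r i : seen (r i) \subset degen_track r i.
Proof. by case: i => [|i] //=; rewrite /degen_update; case: ifP => _; rewrite ?subsetUr. Qed.

Lemma degen_track_seen r n m k : degen_track r n = setT -> n < m ->
  k \in degen_track r m -> exists2 p, n < p <= m & gacc k (r p).
Proof.
move=> full; elim: m => // m IHm; rewrite ltnS leq_eqVlt => /orP[/eqP<-|nm] /=.
  by rewrite /degen_update full eqxx inE => kS; exists n.+1; rewrite ?ltnSn.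
have now_seen : gacc k (r m.+1) -> exists2 p, n < p <= m.+1 & gacc k (r p).
  by exists m.+1 => //; lia.
rewrite /degen_update; case: ifP => _; rewrite !inE // => /orP[|//].
by case/IHm=> // p npm kp; exists p => //; lia.
Qed.

Lemma degen_track_mono r p q : (forall m, p <= m < q -> degen_track r m != setT) ->
  p <= q -> degen_track r p \subset degen_track r q.
Proof.
move=> no_reset; elim: q no_reset => [|q IHq] no_reset; first by rewrite leqn0 => /eqP->.
rewrite leq_eqVlt => /orP[/eqP-> //|pq]; apply: subset_trans (IHq _ pq) _.
  by move=> m pmq; apply: no_reset; lia.
have no_reset_q : degen_track r q != setT by apply: no_reset; lia.
by rewrite /= /degen_update (negbTE no_reset_q) subsetUl.
Qed.

Lemma degen_lang pi : lang degen pi <-> glang G pi.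
Proof.
split.
- move=> [rs [rs0 [rsd rsacc]]]; set r := fun i => (rs i).1.
  have trackE i : (rs i).2 = degen_track r i.
    elim: i => [|i IHi] /=; first by case/andP: rs0 => _ /eqP.
    by case/andP: (rsd i) => _ /eqP->; rewrite IHi.
  exists r; split; first by case/andP: rs0.
  split=> [i|k n]; first by case/andP: (rsd i).
  have [m1 [nm1 /eqP full1]] := rsacc n.
  have [m2 [m12 /eqP full2]] := rsacc m1.+1.
  rewrite trackE in full1; rewrite trackE in full2.
  have k_full : k \in degen_track r m2 by rewrite full2 inE.
  have [p m1p kp] := degen_track_seen full1 m12 k_full.
  by exists p; split=> //; lia.
- move=> [r [r0 [rd racc]]].
  exists (fun i => (r i, degen_track r i)); split; first by rewrite /= r0 eqxx.
  split=> [i|n]; first by rewrite /= rd eqxx.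
  apply: NNPP => no_full.
  have no_reset m : n <= m -> degen_track r m != setT.
    by move=> nm; apply/eqP => full; apply: no_full; exists m; rewrite /= full.
  pose p k := proj1_sig (constructive_indefinite_description _ (racc k n)).
  have pP k : n <= p k /\ gacc k (r (p k)).
    by rewrite /p; case: constructive_indefinite_description.
  pose M := maxn n (\max_k p k).
  have : degen_track r M == setT.
    apply/eqP/setP => k; rewrite inE; apply: (subsetP (degen_track_mono (p := p k) _ _)).
    - by move=> m /andP[pm _]; apply: no_reset; case: (pP k) => np _; lia.
    - exact: leq_trans (leq_bigmax k) (leq_maxr _ _).
    - by apply: (subsetP (seen_sub_track _ _)); rewrite inE; case: (pP k).
  by rewrite (negbTE (no_reset M (leq_maxl _ _))).
Qed.

End Degeneralization.

Section Tableau.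
Variable phi : ltl AP.

Local Notation cl := (subformulas phi).

(* Slot [index f cl] holds the truth value of [f]; formulas outside [cl] all share the
   extra last slot, which is there so that [inord] can do the indexing. *)
Definition valuation := {ffun 'I_(size cl).+1 -> bool}.

Definition holds (t : valuation) (f : ltl AP) : bool := t (inord (index f cl)).

Definition locally_consistent (t t' : valuation) (a : {set AP}) (f : ltl AP) : bool :=
  match f with
  | LBot => ~~ holds t f
  | LAtom p => holds t f == (p \in a)
  | LNeg g => holds t f == ~~ holds t g
  | LOr g h => holds t f == holds t g || holds t h
  | LNext g => holds t f == holds t' g
  | LUntil g h => holds t f == holds t h || holds t g && holds t' f
  end.

Definition consistent (t t' : valuation) (a : {set AP}) : bool :=
  all (locally_consistent t t' a) cl.

Definition fulfils (i : 'I_(size cl).+1) (t : valuation) : bool :=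
  if nth LBot cl i is LUntil g h then holds t (LUntil g h) ==> holds t h else true.

Definition tableau : gba :=
  @GBA valuation (fun t => holds t phi) (fun t a t' => consistent t t' a)
    'I_(size cl).+1 fulfils.

Lemma nth_index_cl f : f \in cl -> nth LBot cl (inord (index f cl) : 'I_(size cl).+1) = f.
Proof. by move=> fcl; rewrite inordK ?nth_index // ltnS ltnW // index_mem. Qed.

Lemma tableau_sound pi (t : nat -> valuation) :
  (forall j, consistent (t j) (t j.+1) (pi j)) ->
  (forall i n, exists2 m, n <= m & fulfils i (t m)) ->
  forall f, f \in cl -> forall j, reflect (sat pi j f) (holds (t j) f).
Proof.
move=> t_cons t_fair; elim=> [|p|g IHg|g IHg h IHh|g IHg|g IHg h IHh] fcl j;
  have /= children := subformulas_children fcl;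
  have /= := allP (t_cons j) _ fcl.
- by move/negbTE->; constructor.
- by move/eqP->; apply: idP.
- by move/eqP->; case: (IHg children j); constructor.
- case/andP: children => gcl hcl.
  by move/eqP->; case: (IHg gcl j); case: (IHh hcl j) => /=; constructor; tauto.
- by move/eqP->; apply: IHg.
- case/andP: children => gcl hcl _; set u := LUntil g h.
  have u_step k : holds (t k) u = holds (t k) h || holds (t k) g && holds (t k.+1) u.
    by apply/eqP; exact: allP (t_cons k) _ fcl.
  have u_fair n : exists2 m, n <= m & holds (t m) u ==> holds (t m) h.
    have [m nm] := t_fair (inord (index u cl)) n.
    by rewrite /fulfils nth_index_cl //; exists m.
  apply: (iffP (until_seqP u_step u_fair j)) => [[k jk [hk gk]] | [k [jk [hk gk]]]].
  + exists k; split=> //; split=> [|i ji ik]; [exact/(IHh hcl) | apply/(IHg gcl)/gk].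
    by rewrite ji.
  + exists k => //; split=> [|i /andP[ji ik]]; [exact/(IHh hcl) | exact/(IHg gcl)/gk].
Qed.

Definition truth (pi : trace AP) (j : nat) : valuation :=
  [ffun i : 'I_(size cl).+1 => asbool (sat pi j (nth LBot cl i))].

Lemma holds_truth pi j f : f \in cl -> holds (truth pi j) f = asbool (sat pi j f).
Proof. by move=> fcl; rewrite /holds ffunE nth_index_cl. Qed.

Lemma truth_consistent pi j : consistent (truth pi j) (truth pi j.+1) (pi j).
Proof.
apply/allP=> f fcl; have := subformulas_children fcl.
case: f fcl => [|p|g|g h|g|g h] fcl /= children;
  rewrite !holds_truth //; try (by case/andP: children).
- by case: asboolP => // -[].
- by case: asboolP => /= [->|/negP/negbTE->].
- by do ![case: asboolP => //=]; tauto.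
- by do ![case: asboolP => //=]; tauto.
- have := sat_until_step pi j g h.
  by do ![case: asboolP => //=]; tauto.
Qed.

Lemma truth_fulfils pi i n : exists2 m, n <= m & fulfils i (truth pi m).
Proof.
rewrite /fulfils; case ith: (nth LBot cl i) => [| | | | |g h]; try by exists n.
have ucl : LUntil g h \in cl.
  by case: (ltnP i (size cl)) => [ilt|ige]; [rewrite -ith mem_nth | rewrite nth_default in ith].
have /andP[_ hcl] := subformulas_children ucl.
case: (asboolP (sat pi n (LUntil g h))) => [[k [nk [hk _]]] | not_u].
- by exists k => //; rewrite !holds_truth //; apply/implyP => _; apply/asboolP.
- by exists n => //; rewrite holds_truth //; apply/implyP => /asboolP.
Qed.

Lemma tableau_lang pi : glang tableau pi <-> models pi phi.
Proof.
split=> [[t [t0 [t_cons t_acc]]] | phi_pi].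
- apply/(tableau_sound t_cons _ (subformulas_self phi)) => // i n.
  by have [m [nm fm]] := t_acc i n; exists m.
- exists (truth pi); split; first by rewrite /= holds_truth ?subformulas_self //; case: asboolP.
  split=> [j|i n]; first exact: truth_consistent.
  by have [m nm fm] := truth_fulfils pi i n; exists m.
Qed.

End Tableau.

Definition gba_meet (B : buchi AP) (G : gba) : gba :=
  @GBA (bstate B * gstate G)%type
    (fun s => binit s.1 && ginit s.2)
    (fun s a s' => bdelta s.1 a s'.1 && gdelta s.2 a s'.2)
    (option (gindex G))
    (fun k s => if k is Some k then gacc k s.2 else bacc s.1).

Lemma glang_meet B G pi : glang (gba_meet B G) pi <-> lang B pi /\ glang G pi.
Proof.
split=> [[r [/andP[r0B r0G] [rd racc]]] | [[rB [rB0 [rBd rBacc]]] [rG [rG0 [rGd rGacc]]]]].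
- split.
  + exists (fun i => (r i).1); split=> //; split=> [i|n]; first by case/andP: (rd i).
    exact: racc None n.
  + exists (fun i => (r i).2); split=> //; split=> [i|k n]; first by case/andP: (rd i).
    exact: racc (Some k) n.
- exists (fun i => (rB i, rG i)); split; first by rewrite /= rB0.
  split=> [i|[k|] n] /=; [by rewrite rBd rGd | exact: rGacc | exact: rBacc].
Qed.

Definition buchi_and (B : buchi AP) (phi : ltl AP) : buchi AP := degen (gba_meet B (tableau phi)).

Lemma lang_buchi_and B phi pi : lang (buchi_and B phi) pi <-> lang B pi /\ models pi phi.
Proof. by rewrite degen_lang glang_meet tableau_lang. Qed.

Definition buchi_top : buchi AP :=
  @Buchi AP unit (fun _ => true) (fun _ _ _ => true) (fun _ => true).

Lemma lang_buchi_top pi : lang buchi_top pi.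
Proof. by exists (fun _ => tt); split=> //; split=> // n; exists n. Qed.

Definition buchi_union (A B : buchi AP) : buchi AP :=
  @Buchi AP (bstate A + bstate B)%type
    (fun s => match s with inl a => binit a | inr b => binit b end)
    (fun s l s' => match s, s' with
                   | inl a, inl a' => bdelta a l a'
                   | inr b, inr b' => bdelta b l b'
                   | _, _ => false
                   end)
    (fun s => match s with inl a => bacc a | inr b => bacc b end).

Lemma lang_buchi_union A B pi : lang (buchi_union A B) pi <-> lang A pi \/ lang B pi.
Proof.
split; last by case=> -[r run]; [exists (inl \o r) | exists (inr \o r)].
move=> [r [r0 [rd racc]]]; case r0E: (r 0) => [a0|b0]; [left | right].
- pose ra i := if r i is inl a then a else a0.
  have raE i : r i = inl (ra i).
    elim: i => [|i IHi]; first by rewrite /ra r0E.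
    by move: (rd i); rewrite /ra IHi; case: (r i.+1).
  exists ra; split; first by move: r0; rewrite raE.
  split=> [i|n]; first by move: (rd i); rewrite !raE.
  by have [m] := racc n; rewrite raE; exists m.
- pose rb i := if r i is inr b then b else b0.
  have rbE i : r i = inr (rb i).
    elim: i => [|i IHi]; first by rewrite /rb r0E.
    by move: (rd i); rewrite /rb IHi; case: (r i.+1).
  exists rb; split; first by move: r0; rewrite rbE.
  split=> [i|n]; first by move: (rd i); rewrite !rbE.
  by have [m] := racc n; rewrite rbE; exists m.
Qed.

Lemma supp_buchi_union A B x : supp (buchi_union A B) x <-> supp A x /\ supp B x.
Proof.
split=> [sx | [sA sB] pi /lang_buchi_union[]]; [| exact: sA | exact: sB].
by split=> pi pi_lang; apply: sx; apply/lang_buchi_union; [left | right].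
Qed.

Section Lasso.
Variables (i j : nat).
Hypothesis ij : i < j.

Definition lasso_next (x : nat) : nat := if x.+1 < j then x.+1 else i.

(* [lasso_pos] runs through 0, ..., j-1 and then cycles through i, ..., j-1. *)
Definition lasso_pos (k : nat) : nat := iter k lasso_next 0.

Lemma lasso_posS k : lasso_pos k.+1 = lasso_next (lasso_pos k).
Proof. by []. Qed.

Lemma lasso_next_lt x : lasso_next x < j.
Proof. by rewrite /lasso_next; case: ifP. Qed.

Lemma lasso_pos_lt k : lasso_pos k < j.
Proof. by case: k => [|k]; [exact: leq_ltn_trans (leq0n i) ij | exact: lasso_next_lt]. Qed.

Lemma lasso_pos_small k : k <= i -> lasso_pos k = k.
Proof.
elim: k => // k IHk ki; rewrite lasso_posS IHk; last lia.
by rewrite /lasso_next ifT //; lia.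
Qed.

Lemma lasso_next_iter d : i + d < j -> iter d lasso_next i = i + d.
Proof.
elim: d => [|d IHd] idj; first by rewrite addn0.
by rewrite iterS IHd; [rewrite /lasso_next ifT; lia | lia].
Qed.

Lemma lasso_pos_period t : lasso_pos (i + t * (j - i)) = i.
Proof.
elim: t => [|t IHt]; first by rewrite addn0 lasso_pos_small.
have cycle : iter (j - i) lasso_next i = i.
  have -> : j - i = (j - i.+1).+1 by lia.
  by rewrite iterS lasso_next_iter; [rewrite /lasso_next ifF; lia | lia].
by rewrite mulSn addnCA /lasso_pos iterD -/(lasso_pos _) IHt cycle.
Qed.

Variable pi : trace AP.

Definition lasso_kripke : kripke AP :=
  @Kripke AP 'I_j (fun x => val x == 0) (fun x y => val y == lasso_next x) (fun x => pi x)
    (ex_intro _ (Ordinal (lasso_pos_lt 0)) (eqxx _))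
    (fun x => ex_intro _ (Ordinal (lasso_next_lt x)) (eqxx _)).

Lemma lasso_kripke_trace pi' : is_trace lasso_kripke pi' <-> pi' = pi \o lasso_pos.
Proof.
split=> [[r [r0 [rd rl]]] | ->].
- have rE k : val (r k) = lasso_pos k.
    elim: k => [|k IHk]; first exact/eqP.
    by rewrite lasso_posS -IHk; apply/eqP; exact: rd.
  by apply: functional_extensionality => k; rewrite rl /= rE.
- exists (fun k => Ordinal (lasso_pos_lt k)).
  by split; [exact: eqxx | split=> // k; exact: eqxx].
Qed.

Lemma lasso_lang (C : buchi AP) (rho : nat -> bstate C) :
  accepting_run C pi rho -> rho i = rho j -> bacc (rho i) -> lang C (pi \o lasso_pos).
Proof.
move=> [rho0 [rhod _]] rhoij acc_i; exists (rho \o lasso_pos); split=> //; split=> [k|n] /=.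
- rewrite /lasso_next; case: ifP => [_ | not_lt]; first exact: rhod.
  have jE : (lasso_pos k).+1 = j by have := lasso_pos_lt k; lia.
  by rewrite rhoij -jE; exact: rhod.
- by exists (i + n * (j - i)); rewrite lasso_pos_period; split=> //; nia.
Qed.

End Lasso.

Lemma nonempty_lang_kripke (C : buchi AP) : (exists pi, lang C pi) ->
  exists M : kripke AP, (exists pi, is_trace M pi) /\ forall pi, is_trace M pi -> lang C pi.
Proof.
move=> [pi [rho run]]; have [_ [_ rho_acc]] := run.
pose next_acc n := proj1_sig (constructive_indefinite_description _ (rho_acc n)).
have next_accP n : n <= next_acc n /\ bacc (rho (next_acc n)).
  by rewrite /next_acc; case: constructive_indefinite_description.
pose acc_pos k := iter k (fun m => next_acc m.+1) (next_acc 0).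
have acc_pos_lt : {homo acc_pos : x y / x < y}.
  by apply: homo_ltn => [y x z|k]; [exact: ltn_trans | case: (next_accP (acc_pos k).+1)].
have acc_posP k : bacc (rho (acc_pos k)).
  by case: k => [|k]; [case: (next_accP 0) | case: (next_accP (acc_pos k).+1)].
have [x [y [xy rhoxy]]] := nat_pigeonhole (rho \o acc_pos).
have ij := acc_pos_lt _ _ xy.
exists (lasso_kripke ij pi); split.
  by exists (pi \o lasso_pos (acc_pos x) (acc_pos y)); apply/lasso_kripke_trace.
by move=> pi' /lasso_kripke_trace->; apply: lasso_lang run rhoxy (acc_posP x).
Qed.

Lemma theory_ext (T T' : theory AP) : (forall x, T x <-> T' x) -> T = T'.
Proof.
by move=> TT'; apply: functional_extensionality => x; apply: propositional_extensionality.
Qed.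

Lemma Cn_ext (X : theory AP) : subth X (Cn X).
Proof. by move=> f Xf M MX pi tr; exact: MX. Qed.

Lemma Cn_supp (X : theory AP) (C : buchi AP) : subth X (supp C) -> subth (Cn X) (supp C).
Proof.
move=> XC f CnXf pi C_pi; apply: NNPP => not_f.
have : exists pi, lang (buchi_and C (LNeg f)) pi by exists pi; apply/lang_buchi_and.
case/nonempty_lang_kripke=> M [[pi0 tr0] MC].
have /lang_buchi_and[_] := MC _ tr0; apply; apply: (CnXf M) tr0 => pi' tr' x Xx.
by have /lang_buchi_and[C_pi' _] := MC _ tr'; exact: XC x Xx pi' C_pi'.
Qed.

Lemma Cn_suppE (A : buchi AP) : Cn (supp A) = supp A.
Proof. by apply: theory_ext => x; split; [exact: Cn_supp | exact: Cn_ext]. Qed.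

Lemma Cn0_tautology (f : ltl AP) : Cn (fun _ => False) f <-> tautology f.
Proof.
split=> [Cn0f pi | taut_f M _ pi _]; last exact: taut_f.
by apply: (Cn_supp (C := buchi_top)) Cn0f pi (lang_buchi_top pi).
Qed.

Lemma lequiv_models (f g : ltl AP) : lequiv f g -> forall pi, models pi f -> models pi g.
Proof.
move=> fg pi f_pi.
have Cnf_g : Cn (fun x => x = f) g by rewrite fg; exact: Cn_ext.
have f_sound : subth (fun x => x = f) (supp (buchi_and buchi_top f)).
  by move=> x -> pi' /lang_buchi_and[].
by apply: (Cn_supp f_sound Cnf_g); apply/lang_buchi_and; split; first exact: lang_buchi_top.
Qed.

Lemma lequiv_modelsE (f g : ltl AP) : lequiv f g -> forall pi, models pi f <-> models pi g.
Proof. by move=> fg pi; split; apply: lequiv_models; last exact: esym. Qed.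

Lemma lequiv_tautology (f g : ltl AP) : lequiv f g -> tautology f -> tautology g.
Proof. by move=> fg taut_f pi; apply: lequiv_models fg pi (taut_f pi). Qed.

Lemma lang_buchi_and_equiv B (f g : ltl AP) : (forall pi, models pi f <-> models pi g) ->
  lang (buchi_and B f) = lang (buchi_and B g).
Proof.
move=> fg; apply: functional_extensionality => pi; apply: propositional_extensionality.
by rewrite !lang_buchi_and fg.
Qed.

Lemma supp_buchi_and_case B (f x : ltl AP) :
  supp (buchi_and B f) x -> supp (buchi_and B (LNeg f)) x -> supp B x.
Proof.
move=> sf snf pi B_pi; case: (classic (models pi f)) => f_pi.
- by apply: sf; apply/lang_buchi_and.
- by apply: snf; apply/lang_buchi_and.
Qed.

Lemma refutation_nonempty B (f : ltl AP) :
  ~ supp B f -> exists pi, lang (buchi_and B (LNeg f)) pi.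
Proof.
move=> not_supp; apply: NNPP => no_pi; apply: not_supp => pi B_pi.
by apply: NNPP => not_f; apply: no_pi; exists pi; apply/lang_buchi_and.
Qed.

Definition contractible (K : theory AP) (f : ltl AP) : Prop :=
  ~ Cn (fun _ => False) f /\ K f.

Lemma contractible_lequiv (A : buchi AP) f g :
  lequiv f g -> contractible (supp A) f -> contractible (supp A) g.
Proof.
move=> fg [not_Cn0f Af]; split=> [Cn0g | pi A_pi].
- by apply/not_Cn0f/Cn0_tautology/(lequiv_tautology (esym fg))/Cn0_tautology.
- exact: lequiv_models fg pi (Af pi A_pi).
Qed.

Section InducedContraction.
Variables (A0 : buchi AP) (g : ltl AP -> buchi AP).

Local Notation K := (supp A0).

Lemma induced_EBuchi : remains_in_EBuchi (induced K g).
Proof.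
move=> f; case: (classic (contractible K f)) => [f_contr | f_triv].
- exists (buchi_union A0 (g f)); apply: theory_ext => x; rewrite supp_buchi_union.
  by split=> -[Kx gfx]; split=> //; exact: gfx.
- by exists A0; apply: theory_ext => x; split=> [[] //| Kx]; split.
Qed.

Hypothesis g_choice : buchi_choice g.

Lemma induced_rational : rational K (induced K g).
Proof.
have [g_ne [g_neg g_equiv]] := g_choice.
have not_taut (f : ltl AP) : ~ Cn (fun _ => False) f -> ~ tautology f.
  by move=> not_Cn0f /Cn0_tautology.
split; [|split; [|split; [|split; [|split]]]].
- by move=> f; have [D ->] := induced_EBuchi f; rewrite Cn_suppE.
- by move=> f x [].
- by move=> f not_Kf; apply: theory_ext => x; split=> [[] //| Kx]; split=> // -[].
- move=> f not_Cn0f [Kf /(_ (conj not_Cn0f Kf)) gf_f].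
  have [pi g_pi] := g_ne f.
  exact: g_neg f (not_taut _ not_Cn0f) pi g_pi (gf_f pi g_pi).
- move=> f x Kx; case: (classic (contractible K f)) => [[not_Cn0f Kf] | f_triv]; last first.
    by apply: Cn_ext; left; split=> // f_contr.
  move=> M M_sat pi tr.
  (* [x \/ ~ f] survives the contraction and, together with [f], entails [x]. *)
  have weak_x : induced K g f (LOr x (LNeg f)).
    split=> [pi' A0_pi' | _ pi' g_pi']; first by left; exact: Kx.
    by right; exact: g_neg f (not_taut _ not_Cn0f) pi' g_pi'.
  by case: (M_sat pi tr _ (or_introl weak_x)) => // /(_ (M_sat pi tr f (or_intror erefl))).
- move=> f f' ff'; apply: theory_ext => x.
  have contr_iff : contractible K f <-> contractible K f'.
    by split; apply: contractible_lequiv; last exact: esym.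
  have supp_g : supp (g f) x <-> supp (g f') x by rewrite /supp (g_equiv _ _ ff').
  rewrite /induced -/(contractible K f) -/(contractible K f'); tauto.
Qed.

End InducedContraction.

Definition buchi_of (T : theory AP) : buchi AP :=
  epsilon (inhabits buchi_top) (fun A => T = supp A).

Lemma buchi_ofP T : E_Buchi T -> T = supp (buchi_of T).
Proof. exact: epsilon_spec. Qed.

Lemma rational_noncontractible (K : theory AP) (c : contraction AP) f :
  rational K c -> ~ contractible K f -> c f = K.
Proof.
move=> [K1 [K2 [K3 [_ [K5 _]]]]] f_triv; case: (classic (K f)) => Kf; last exact: K3.
have /Cn0_tautology taut_f : Cn (fun _ => False) f by apply: NNPP => not_Cn0f; apply: f_triv.
apply: theory_ext => x; split=> [|Kx]; first exact: K2.
rewrite K1 => M M_sat pi tr; apply: (K5 f x Kx M) tr => pi' tr' y [cfy|->]; first exact: M_sat.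
exact: taut_f.
Qed.

Section ChoiceOfContraction.
Variables (A0 : buchi AP) (c : contraction AP).
Hypotheses (c_rational : rational (supp A0) c) (c_Buchi : remains_in_EBuchi c).

Local Notation K := (supp A0).

(* Outside the contractible case only (BF1) and (BF2) matter; a tautology has no refuting
   word, so any nonempty automaton will do. *)
Definition contraction_choice (f : ltl AP) : buchi AP :=
  if asbool (contractible K f) then buchi_and (buchi_of (c f)) (LNeg f)
  else if asbool (tautology f) then buchi_top else buchi_and buchi_top (LNeg f).

Lemma contraction_choiceP : buchi_choice contraction_choice.
Proof.
have [_ [_ [_ [K4 [_ K6]]]]] := c_rational.
split; [|split].
- move=> f; rewrite /contraction_choice; case: asboolP => [[not_Cn0f Kf] | _].
  + by apply: refutation_nonempty; rewrite -(buchi_ofP (c_Buchi f)); exact: K4.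
  + case: asboolP => [_ | not_taut]; first by exists (fun _ => set0); exact: lang_buchi_top.
    by apply: refutation_nonempty => supp_f; apply: not_taut => pi; exact/supp_f/lang_buchi_top.
- move=> f not_taut pi; rewrite /contraction_choice.
  case: asboolP => _; first by case/lang_buchi_and.
  by case: asboolP => // _ /lang_buchi_and[].
- move=> f f' ff'; rewrite /contraction_choice (K6 _ _ ff').
  have -> : contractible K f' = contractible K f.
    by apply: propositional_extensionality; split; apply: contractible_lequiv; last exact: esym.
  have -> : tautology f' = tautology f.
    by apply: propositional_extensionality; split; apply: lequiv_tautology; last exact: esym.
  have negE pi : models pi (LNeg f) <-> models pi (LNeg f').
    by rewrite /models /= -/(models pi f) -/(models pi f') (lequiv_modelsE ff').
  by case: asboolP => _; [|case: asboolP => _]; rewrite ?(lang_buchi_and_equiv _ negE).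
Qed.

Lemma contraction_choice_induced : c = induced K contraction_choice.
Proof.
have [_ [K2 [_ [_ [K5 _]]]]] := c_rational.
apply: functional_extensionality => f; apply: theory_ext => x.
rewrite /induced -/(contractible K f) /contraction_choice.
case: asboolP => [f_contr | f_triv]; last first.
  by rewrite (rational_noncontractible c_rational f_triv); tauto.
have cfE := buchi_ofP (c_Buchi f); split.
- move=> cfx; split=> [|_]; first exact: K2 f x cfx.
  by rewrite cfE in cfx; move=> pi /lang_buchi_and[B_pi _]; exact: cfx.
- move=> [Kx /(_ f_contr) sneg]; rewrite cfE; apply: supp_buchi_and_case sneg.
  apply: (Cn_supp _ (K5 f x Kx)) => y [cfy | ->] pi /lang_buchi_and[B_pi f_pi] //.
  by rewrite cfE in cfy; exact: cfy.
Qed.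

End ChoiceOfContraction.

End BuchiContraction.

Theorem mainTheorem16 (AP : finType) (AP_nonempty : 0 < #|AP|)
  (K : theory AP) (hK : E_Buchi AP K) (c : contraction AP) :
  (rational AP K c /\ remains_in_EBuchi AP c) <->
  (exists g : ltl AP -> buchi AP, buchi_choice AP g /\ c = induced AP K g).
Proof.
case: hK => A0 ->; split=> [[c_rational c_Buchi] | [g [g_choice ->]]].
- exists (contraction_choice A0 c); split.
  + exact: contraction_choiceP.
  + exact: contraction_choice_induced.
- by split; [exact: induced_rational | exact: induced_EBuchi].
Qed.
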